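(* Let $n\ge k\ge 2$ and let $\Sigma\subset\mathbb{R}$ be a finite set. If $M$ is a $k\times n$ real matrix with all entries in $\Sigma$ such that every $k\times k$ submatrix formed by $k$ of its columns is nonsingular, then $|\Sigma|\ge\sqrt{n/k}$. *)

From mathcomp Require Export reals.
From mathcomp Require Export all_boot all_order all_algebra.
Set Implicit Arguments. Unset Strict Implicit. Unset Printing Implicit Defensive.

Import Order.TTheory GRing.Theory Num.Theory.
Local Open Scope ring_scope.

(* Counting argument.  Fix two distinct rows i0, i1 of M and label every
   column j by its signature (M i0 j, M i1 j), a pair of elements of Sigma,
   so there are at most |Sigma|^2 signatures.  If k columns shared a
   signature, the k x k submatrix they form would have two constant rows,
   hence vanishing determinant; so every signature class has fewer than k
   columns.  Summing over the classes gives n <= |Sigma|^2 (k - 1), and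
   therefore n / k <= |Sigma|^2. *)

(* A square matrix with two distinct constant rows is singular: a suitable
   combination of the two rows vanishes. *)
Lemma det_two_const_rows (R : fieldType) (k : nat) (A : 'M[R]_k)
    (i0 i1 : 'I_k) (a b : R) :
  i0 != i1 -> (forall j, A i0 j = a) -> (forall j, A i1 j = b) -> \det A = 0.
Proof.
move=> i0_neq_i1 row0 row1; apply/eqP/det0P.
have [a_eq0 | a_neq0] := eqVneq a 0.
  exists (delta_mx 0 i0).
    apply/eqP => /matrixP/(_ 0 i0); rewrite !mxE !eqxx /=.
    by move/eqP; rewrite oner_eq0.
  by rewrite -rowE; apply/rowP => j; rewrite !mxE row0 a_eq0.
exists (b *: delta_mx 0 i0 - a *: delta_mx 0 i1).
  apply/eqP => /matrixP/(_ 0 i1).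
  rewrite !mxE !eqxx /= eq_sym (negbTE i0_neq_i1) mulr0 mulr1 sub0r.
  by move/eqP; rewrite oppr_eq0 (negbTE a_neq0).
rewrite mulmxBl -!scalemxAl -!rowE; apply/rowP => j.
by rewrite !mxE row0 row1 mulrC subrr.
Qed.

Lemma injection_into_large_set (T : finType) (A : {pred T}) (k : nat) :
  (k <= #|A|)%N -> {f : 'I_k -> T | injective f & forall i, f i \in A}.
Proof.
move=> k_le_A; exists (fun i => enum_val (widen_ord k_le_A i)).
  by move=> x y /enum_val_inj /(congr1 val) /= /val_inj.
by move=> i; exact: enum_valP.
Qed.

Lemma card_le_small_fibers (T : finType) (m c : nat) (g : 'I_m -> T) :
  (forall t, #|[pred j | g j == t]| <= c)%N -> (m <= #|T| * c)%N.
Proof.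
move=> small_fibers.
have -> : m = \sum_(j : 'I_m) 1%N by rewrite sum1_card card_ord.
rewrite (partition_big g xpredT) //= -[(#|T| * c)%N]sum_nat_const.
by apply: leq_sum => t _; rewrite sum1_card; apply: small_fibers.
Qed.

Lemma sqrt_ratio_le (R : rcfType) (n k s : nat) :
  (0 < k)%N -> (n <= s * s * k)%N -> Num.sqrt (n%:R / k%:R : R) <= s%:R.
Proof.
move=> k_gt0 n_le; have kR_gt0 : (0 : R) < k%:R by rewrite ltr0n.
rewrite -(ger0_norm (ler0n R s)) -sqrtr_sqr ler_sqrt ?sqr_ge0 //.
by rewrite ler_pdivrMr // -natrX -natrM ler_nat -mulnn.
Qed.

Theorem claim1p4 (R : realType) (k n : nat) (Sigma : seq R)
  (M : 'M[R]_(k, n)) :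
  (2 <= k)%N -> (k <= n)%N -> uniq Sigma ->
  (forall i j, M i j \in Sigma) ->
  (forall f : 'I_k -> 'I_n, injective f -> \det (colsub f M) != 0) ->
  Num.sqrt (n%:R / k%:R : R) <= (size Sigma)%:R.
Proof.
move=> k_ge2 _ _ entries_in_Sigma nonsingular.
set s := size Sigma.
have k_gt0 : (0 < k)%N by apply: leq_trans k_ge2.
pose i0 : 'I_k := Ordinal k_gt0; pose i1 : 'I_k := Ordinal k_ge2.
have idx i j : (index (M i j) Sigma < s)%N by rewrite index_mem.
pose signature (j : 'I_n) : 'I_s * 'I_s := (Ordinal (idx i0 j), Ordinal (idx i1 j)).
(* k columns of a common signature would span a singular k x k submatrix *)
have small_classes p : (#|[pred j | signature j == p]| <= k.-1)%N.
  rewrite -ltnS prednK // ltnNge; apply/negP => /injection_into_large_set.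
  case=> f f_inj f_in_class; apply: (negP (nonsingular f f_inj)); apply/eqP.
  apply: (@det_two_const_rows _ _ _ i0 i1 (nth 0 Sigma p.1) (nth 0 Sigma p.2)) => // j;
    by rewrite mxE -(eqP (f_in_class j)) /= nth_index.
(* hence n <= s^2 (k - 1) <= s^2 k *)
apply: (@sqrt_ratio_le R n k s k_gt0).
apply: leq_trans (@card_le_small_fibers _ n _ signature small_classes) _.
by rewrite card_prod !card_ord leq_mul2l leq_pred orbT.
Qed.
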